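(* Let $p>1$ be an integer, let $d_1,\dots,d_p\in(0,\tfrac12)$, and let $(\varepsilon_t)_{t\in\mathbb{Z}}$ be a zero-mean white noise (pairwise uncorrelated, $E\varepsilon_t=0$) with finite variances $\sigma_t^2$ satisfying $\sigma_{t+p}^2=\sigma_t^2$. Write each $t\in\mathbb{Z}$ uniquely as $t=i+pm$ with $i\in\{1,\dots,p\}$, $m\in\mathbb{Z}$, and define the process $X_{i+pm}=\sum_{j=0}^{\infty}\psi_j^i\varepsilon_{i+pm-j}$ (limit in $L^2$), where $\psi_j^i=\frac{\Gamma(j+d_i)}{\Gamma(j+1)\Gamma(d_i)}$. Let $\pi_j^i=\frac{\Gamma(j-d_i)}{\Gamma(j+1)\Gamma(-d_i)}$. Then for every $i\in\{1,\dots,p\}$ and $m\in\mathbb{Z}$, the series $\sum_{j=0}^{\infty}\pi_j^iX_{i+pm-j}$ converges in quadratic mean.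
   Context: $(X_t)$ is the periodic fractionally integrated process PtvARFIMA$_p(0,d_t,0)$, i.e. the causal solution of $(1-B)^{d_i}X_{i+pm}=\varepsilon_{i+pm}$ with $B$ the backshift operator; the series $\sum_j\pi_j^iX_{i+pm-j}$ is the infinite autoregressive representation $(1-B)^{d_i}X_{i+pm}$. *)

From HB Require Import structures.
From mathcomp Require Import all_boot all_order all_algebra.
From mathcomp Require Import all_classical all_reals all_analysis.
Set Implicit Arguments. Unset Strict Implicit. Unset Printing Implicit Defensive.
Import Order.TTheory GRing.Theory Num.Theory.
Local Open Scope ring_scope.
Local Open Scope classical_set_scope.

(* gamma_ratio a j = Gamma(j+a) / (Gamma(j+1) Gamma(a)),
   written via the (exact) product identity
   Gamma(j+a)/Gamma(a) = prod_{k=1}^{j} (k-1+a), valid whenever Gamma(a)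
   is defined (a not a non-positive integer). *)
Definition gamma_ratio {R : realType} (a : R) (j : nat) : R :=
  \prod_(1 <= k < j.+1) (((k.-1)%:R + a) / k%:R).

Definition psi_coef {R : realType} (dd : R) (j : nat) : R := gamma_ratio dd j.
Definition pi_coef {R : realType} (dd : R) (j : nat) : R := gamma_ratio (- dd) j.

Definition qm_cvg {d} {T : measurableType d} {R : realType}
  (P : probability T R) (S : nat -> T -> R) (Y : T -> R) : Prop :=
  measurable_fun setT Y /\
  ((fun n => (\int[P]_x (((S n x - Y x) ^+ 2)%:E))%E) @ \oo --> 0%E).

Definition qm_convergent {d} {T : measurableType d} {R : realType}
  (P : probability T R) (S : nat -> T -> R) : Prop :=
  exists Y : T -> R, qm_cvg P S Y.

(* For 0 < e < 1 the coefficients of (1 - B)^e have absolute partial sums at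
   most 2 (they telescope).  Hence sum_j pi_j X_(t-j) converges in quadratic mean
   as soon as E X_s^2 is bounded uniformly in s: by weighted Cauchy-Schwarz the
   square of the remainder after n terms is at most
   (sum_(k>=n) |pi_k|) (sum_(k>=n) |pi_k| X_(t-k)^2), whose expectation is
   O((sum_(k>=n) |pi_k|)^2).  The uniform bound comes from the MA(infinity)
   representation: by orthogonality E (sum_(j<n) psi_j eps_(s-j))^2
   = sum_(j<n) psi_j^2 sigma_(s-j)^2, the variances are periodic hence bounded,
   and sum_j psi_j^2 < oo because psi_j^2 ~ j^(2d-2) with d < 1/2. *)

From HB Require Import structures.
From mathcomp Require Import all_boot all_order all_algebra.
From mathcomp Require Import all_classical all_reals all_analysis.
From mathcomp Require Import ring lra zify measurable_realfun.
Import Order.TTheory GRing.Theory Num.Theory numFieldNormedType.Exports.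
Set Implicit Arguments.
Unset Strict Implicit.
Unset Printing Implicit Defensive.

Local Open Scope ring_scope.
Local Open Scope classical_set_scope.

Section GammaRatio.
Variable R : realType.
Implicit Types (a e : R) (n j : nat).

Lemma gamma_ratio0 a : gamma_ratio a 0 = 1.
Proof. by rewrite /gamma_ratio big_geq. Qed.

Lemma gamma_ratioS a n :
  gamma_ratio a n.+1 = gamma_ratio a n * ((n%:R + a) / n.+1%:R).
Proof. by rewrite /gamma_ratio big_nat_recr. Qed.

Lemma gamma_ratioSr a n :
  gamma_ratio a n.+1 = a / n.+1%:R * gamma_ratio (a + 1) n.
Proof.
elim: n => [|n IH]; first by rewrite gamma_ratioS !gamma_ratio0 add0r mul1r mulr1.
rewrite gamma_ratioS IH gamma_ratioS -!mulrA; congr (_ * _).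
have n1 : (n.+1%:R : R) != 0 by rewrite pnatr_eq0.
have n2 : (n.+2%:R : R) != 0 by rewrite pnatr_eq0.
by move: n1 n2; rewrite -!natr1 => n1 n2; field; rewrite n1 n2.
Qed.

Lemma gamma_ratio_gt0 a n : 0 < a -> 0 < gamma_ratio a n.
Proof.
move=> a_gt0; elim: n => [|n IH]; first by rewrite gamma_ratio0.
by rewrite gamma_ratioS mulr_gt0 // divr_gt0 ?ltr0n // ltr_wpDl.
Qed.

Lemma gamma_ratio_le1 a n : 0 < a <= 1 -> gamma_ratio a n <= 1.
Proof.
move=> /andP[a_gt0 a_le1]; elim: n => [|n IH]; first by rewrite gamma_ratio0.
rewrite gamma_ratioS; apply: mulr_ile1 => //; first exact/ltW/gamma_ratio_gt0.
  by rewrite divr_ge0 ?ler0n // addr_ge0 // ltW.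
by rewrite ler_pdivrMr ?ltr0n // mul1r -natr1 lerD2l.
Qed.

Lemma gamma_ratioN_neq0 e j : 0 < e < 1 -> gamma_ratio (- e) j != 0.
Proof.
move=> /andP[e_gt0 e_lt1]; case: j => [|j]; first by rewrite gamma_ratio0 oner_neq0.
rewrite gamma_ratioSr !mulf_neq0 ?invr_eq0 ?pnatr_eq0 ?oppr_eq0 ?gt_eqF //.
by apply: gamma_ratio_gt0; lra.
Qed.

(* For j >= 1 the terms are negative and |pi_(j+1)| = gamma_ratio (1 - e) j
   - gamma_ratio (1 - e) (j + 1), so the absolute sum telescopes. *)
Lemma sum_norm_gamma_ratioN e N : 0 < e < 1 ->
  \sum_(j < N.+1) `|gamma_ratio (- e) j| = 2 - gamma_ratio (1 - e) N.
Proof.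
move=> /andP[e_gt0 e_lt1]; elim: N => [|N IH].
  by rewrite big_ord_recr big_ord0 /= !gamma_ratio0 add0r normr1; lra.
rewrite big_ord_recr /= IH gamma_ratioSr (addrC (- e)) gamma_ratioS.
have g_gt0 : 0 < gamma_ratio (1 - e) N by apply: gamma_ratio_gt0; lra.
have N_gt0 : (0 : R) < N%:R + 1 by rewrite natr1 ltr0n.
rewrite !normrM normrN gtr0_norm // gtr0_norm // -natr1 gtr0_norm //.
field; lra.
Qed.

Lemma sum_norm_gamma_ratioN_le2 e N : 0 < e < 1 ->
  \sum_(j < N) `|gamma_ratio (- e) j| <= 2.
Proof.
move=> e01; case: N => [|N]; first by rewrite big_ord0.
rewrite sum_norm_gamma_ratioN // gerBl ltW // gamma_ratio_gt0 //.
by case/andP: e01 => *; lra.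
Qed.

End GammaRatio.

Lemma sqr_ratio_le_ratio (R : realFieldType) (d e x : R) :
  2 * e = 1 - 2 * d -> 1 <= x -> d ^+ 2 + e <= e * x ->
  ((x + d) / (x + 1)) ^+ 2 <= (x - e) / (x + 1).
Proof.
move=> e_def x_ge1 ex; have x1_gt0 : 0 < x + 1 by lra.
rewrite expr_div_n ler_pdivrMr ?exprn_gt0 //.
have -> : (x - e) / (x + 1) * (x + 1) ^+ 2 = (x - e) * (x + 1).
  by field; lra.
nra.
Qed.

Section SquareSummable.
Variables (R : realType) (d : R).
Hypotheses (d_gt0 : 0 < d) (d_lt_half : d < 1 / 2).

(* psi_j^2 ~ j^(2d-2) is dominated by |pi_j(e)| ~ j^(-1-e) for e = (1-2d)/2,
   whose partial sums are at most 2; comparing the ratios of consecutive terms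
   (sqr_ratio_le_ratio) avoids any asymptotics of the Gamma function. *)
Let e : R := (1 - 2 * d) / 2.
Let b j : R := `|gamma_ratio (- e) j|.

Let e_gt0 : 0 < e. Proof. by rewrite /e; move: d_lt_half; lra. Qed.
Let e_lt1 : e < 1. Proof. by rewrite /e; move: d_gt0; lra. Qed.
Let e_bounds : 0 < e < 1. Proof. by rewrite e_gt0 e_lt1. Qed.

Let b_gt0 j : 0 < b j. Proof. by rewrite normr_gt0 (gamma_ratioN_neq0 j e_bounds). Qed.

Let bS j : (0 < j)%N -> b j.+1 = b j * ((j%:R - e) / j.+1%:R).
Proof.
move=> j_gt0; rewrite /b gamma_ratioS normrM (addrC _ (- e)) addrC.
congr (_ * _); apply/gtr0_norm/divr_gt0; last by rewrite ltr0n.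
have : (1 : R) <= j%:R by rewrite ler1n.
by move: e_lt1; lra.
Qed.

Let b_nonincr : nonincreasing_seq b.
Proof.
apply/nonincreasing_seqP => -[|j].
  by rewrite /b gamma_ratioS !gamma_ratio0 mul1r add0r divr1 normrN normr1 gtr0_norm // ltW.
rewrite bS //; apply: ler_piMr; first exact: ltW.
by rewrite ler_pdivrMr ?ltr0n // mul1r -(natr1 j.+1); move: e_gt0; lra.
Qed.

Let J := (Num.truncn (d ^+ 2 / e)).+2.

Let J_large : d ^+ 2 / e + 1 <= J%:R.
Proof.
have := truncnS_gt (d ^+ 2 / e); rewrite /J -(natr1 (Num.truncn _).+1); lra.
Qed.

Let sqr_gamma_ratio_le1 j : gamma_ratio d j ^+ 2 <= 1.
Proof.
apply: exprn_ile1; first exact/ltW/gamma_ratio_gt0.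
apply: gamma_ratio_le1; rewrite d_gt0 /=.
by move: d_lt_half; lra.
Qed.

Let sqr_gamma_ratio_le_b j : gamma_ratio d j ^+ 2 * b J <= b j.
Proof.
have sqr_le_b k l : gamma_ratio d k ^+ 2 * b l <= b l.
  by rewrite ler_piMl ?(ltW (b_gt0 _)) ?sqr_gamma_ratio_le1.
have [j_le_J|/ltnW/subnK <-] := leqP j J.
  exact: le_trans (sqr_le_b j J) (b_nonincr j_le_J).
elim: (j - J)%N => [|k IH]; first by rewrite add0n sqr_le_b.
rewrite addSn gamma_ratioS bS ?addn_gt0 ?orbT //.
have x_ge : d ^+ 2 / e + 1 <= (k + J)%:R by rewrite (le_trans J_large) ?ler_nat ?leq_addl.
have x_ge1 : 1 <= (k + J)%:R :> R by rewrite (le_trans _ x_ge) // lerDr divr_ge0 ?sqr_ge0 ?ltW.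
have ex : d ^+ 2 + e <= e * (k + J)%:R.
  by move: x_ge; rewrite -(ler_pM2l e_gt0) mulrDr mulr1 mulrCA divff ?mulr1 ?gt_eqF.
rewrite exprMn -mulrA (mulrC _ (b J)) mulrA (le_trans (ler_wpM2r _ IH)) ?sqr_ge0 //.
rewrite ler_wpM2l ?(ltW (b_gt0 _)) // -(natr1 (k + J)) sqr_ratio_le_ratio //.
by rewrite /e; lra.
Qed.

Lemma sum_sqr_gamma_ratio_bounded :
  exists K, forall n, \sum_(j < n) gamma_ratio d j ^+ 2 <= K.
Proof.
exists (2 / b J) => n.
apply: le_trans (_ : \sum_(j < n) b j / b J <= _).
  by apply: ler_sum => j _; rewrite ler_pdivlMr ?sqr_gamma_ratio_le_b.
by rewrite -mulr_suml ler_wpM2r ?invr_ge0 ?(ltW (b_gt0 _)) ?(sum_norm_gamma_ratioN_le2 n e_bounds).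
Qed.

End SquareSummable.

Lemma sum_ord_addn (V : nmodType) (g : nat -> V) n m :
  \sum_(j < m + n) g j = \sum_(j < n) g j + \sum_(k < m) g (k + n)%N.
Proof.
rewrite addnC big_split_ord /=; congr (_ + _).
by apply: eq_bigr => k _; rewrite addnC.
Qed.

Lemma weighted_sum_sqr_le (R : realFieldType) (w y : nat -> R) n :
  (forall k, 0 <= w k) ->
  (\sum_(k < n) w k * y k) ^+ 2 <= (\sum_(k < n) w k) * \sum_(k < n) w k * y k ^+ 2.
Proof.
move=> w_ge0; elim: n => [|n IH]; first by rewrite !big_ord0 mul0r expr0n.
rewrite !big_ord_recr /=.
set W := \sum_(i < n) w i in IH *; set A := \sum_(i < n) w i * y i in IH *.
set B := \sum_(i < n) w i * y i ^+ 2 in IH *.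
have W_ge0 : 0 <= W by apply: sumr_ge0.
have B_ge0 : 0 <= B by apply: sumr_ge0 => k _; rewrite mulr_ge0 ?sqr_ge0.
have wn_ge0 := w_ge0 n.
suff disc : 0 <= W * y n ^+ 2 - 2 * A * y n + B.
  have := mulr_ge0 wn_ge0 disc; move: IH; rewrite !expr2; nra.
have [W0|W_neq0] := eqVneq W 0.
  move: IH; rewrite W0 mul0r expr2 => IH; have A0 : A = 0 by nra.
  by rewrite A0; lra.
(* completing the square: W (W y^2 - 2 A y + B) = (W y - A)^2 + (W B - A^2) *)
have W_gt0 : 0 < W by rewrite lt_def W_neq0 W_ge0.
rewrite -(pmulr_rge0 _ W_gt0).
have := sqr_ge0 (W * y n - A); move: IH; rewrite !expr2; nra.
Qed.

Lemma partial_sums_cvg_tail_sqr_le (R : realType) (c y : nat -> R) n (t b : R) :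
  (forall m, \sum_(k < m) `|c (k + n)%N| <= t) ->
  (forall m, \sum_(k < m) `|c (k + n)%N| * y (k + n)%N ^+ 2 <= b) ->
  exists2 l, (\sum_(j < m) c j * y j) @[m --> \oo] --> l &
    (l - \sum_(j < n) c j * y j) ^+ 2 <= t * b.
Proof.
move=> ct cyb; set u := fun j => c j * y j.
have t_ge0 : 0 <= t by apply: le_trans (ct 0); rewrite big_ord0.
have b_ge0 : 0 <= b by apply: le_trans (cyb 0); rewrite big_ord0.
have tail_sqr m : (\sum_(k < m) `|u (k + n)%N|) ^+ 2 <= t * b.
  under eq_bigr do rewrite normrM.
  apply: le_trans (weighted_sum_sqr_le (fun k => `|y (k + n)%N|) m
    (fun k => normr_ge0 (c (k + n)%N))) _.
  apply: ler_pM; rewrite ?sumr_ge0 //.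
  by apply: le_trans (cyb m); apply: ler_sum => k _; rewrite real_normK ?num_real.
have tail_le m : \sum_(k < m) `|u (k + n)%N| <= 1 + t * b.
  have := tail_sqr m; have : 0 <= \sum_(k < m) `|u (k + n)%N| by rewrite sumr_ge0.
  rewrite expr2; nra.
have cvg_u : cvgn (series u).
  apply/normed_cvg/nondecreasing_is_cvgn.
    by apply: nondecreasing_series => k _ _; exact: normr_ge0.
  exists (\sum_(j < n) `|u j| + (1 + t * b)) => _ [m _ <-] /=.
  apply: le_trans (_ : \sum_(0 <= j < m + n) `|u j| <= _).
    by apply: (nondecreasing_series (fun _ _ _ => normr_ge0 _)); rewrite leq_addr.
  by rewrite big_mkord (sum_ord_addn (fun j => `|u j|)) lerD2l.
have partial_series m : \sum_(j < m) u j = series u m by rewrite /series /= big_mkord.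
exists (limn (series u)).
  by under eq_fun do rewrite partial_series.
have incr_sqr m : (\sum_(j < m + n) u j - \sum_(j < n) u j) ^+ 2 <= t * b.
  rewrite (sum_ord_addn u) addrC addKr; apply: le_trans (tail_sqr m).
  by rewrite -real_normK ?num_real // lerXn2r ?nnegrE ?sumr_ge0 ?ler_norm_sum.
have shifted : \sum_(j < m + n) u j @[m --> \oo] --> limn (series u).
  rewrite (cvg_shiftn n (fun m => \sum_(j < m) u j)).
  by under eq_fun do rewrite partial_series.
have dist : \sum_(j < m + n) u j - \sum_(j < n) u j @[m --> \oo] -->
    limn (series u) - \sum_(j < n) u j.
  exact: cvgB shifted (cvg_cst _).
rewrite expr2 -(cvg_lim _ (cvgM dist dist)) //.
apply: limr_le; first exact: cvgP (cvgM dist dist).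
by apply: nearW => m /=; rewrite -expr2 incr_sqr.
Qed.

Lemma fine_limn_esup_cvg (R : realType) (u : nat -> R) (l : R) :
  u m @[m --> \oo] --> l -> fine (limn_esup (fun m => (u m)%:E)) = l.
Proof.
move=> ul; have uEl : ((u m)%:E @[m --> \oo] --> l%:E)%E.
  by apply: cvg_EFin; [exact: nearW | exact: ul].
by rewrite is_cvg_limn_esupE ?(cvg_lim _ uEl) //; apply/cvg_ex; exists l%:E.
Qed.

Section AbsSummableSeries.
Context dT (T : measurableType dT) (R : realType) (P : probability T R).
Variables (c : nat -> R) (f : nat -> T -> R) (M C : R).
Hypothesis mf : forall j, measurable_fun setT (f j).
Hypothesis f_sqr_le : forall j, (\int[P]_x ((f j x) ^+ 2)%:E <= M%:E)%E.
Hypothesis sum_abs_le : forall n, \sum_(j < n) `|c j| <= C.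

Let S n x := \sum_(j < n) c j * f j x.
Let Y x := fine (limn_esup (fun m => (S m x)%:E)).
Let tail n : \bar R := (\sum_(k <oo) (`|c (k + n)%N|)%:E)%E.
Let B n x : \bar R := (\sum_(k <oo) ((`|c (k + n)%N| * f (k + n)%N x ^+ 2)%:E))%E.

Let mS n : measurable_fun setT (S n).
Proof. by apply: measurable_sum => j; apply: measurable_funM. Qed.

Let mY : measurable_fun setT Y.
Proof.
apply: measurableT_comp => //; apply: measurable_fun_limn_esup => m.
exact/measurable_EFinP.
Qed.

Let sum_le_tail n m : ((\sum_(k < m) `|c (k + n)%N|)%:E <= tail n)%E.
Proof.
have := @nneseries_lim_ge R (fun k => (`|c (k + n)%N|)%:E) xpredT 0 m
  (fun k _ _ => normr_ge0 _).
by rewrite sumEFin big_mkord.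
Qed.

Let tail_ge0 n : (0 <= tail n)%E.
Proof. by apply: nneseries_ge0 => k _ _; rewrite lee_fin. Qed.

Let tail_fin n : tail n \is a fin_num.
Proof.
rewrite ge0_fin_numE ?tail_ge0 // (le_lt_trans _ (ltry C)) //.
apply: lime_le; first by apply: is_cvg_nneseries => k _ _; rewrite lee_fin.
apply: nearW => m; rewrite sumEFin lee_fin big_mkord.
by rewrite (le_trans _ (sum_abs_le (m + n))) // (sum_ord_addn (fun j => `|c j|)) lerDr sumr_ge0.
Qed.

Let tail_cvg0 : (tail n @[n --> \oo] --> 0)%E.
Proof.
have c_summable : (\sum_(0 <= k <oo | xpredT k) (`|c k|)%:E < +oo)%E.
  have := tail_fin 0; rewrite /tail; under eq_eseriesr do rewrite addn0.
  by rewrite ge0_fin_numE // nneseries_ge0 // => k _ _; rewrite lee_fin.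
have := nneseries_tail_cvg c_summable (fun k _ => normr_ge0 (c k)).
suff -> : tail = (fun N => \sum_(N <= k <oo | xpredT k) (`|c k|)%:E)%E by [].
by apply/funext => N; rewrite /tail (@nneseries_addn R (fun i => (`|c i|)%:E)) //.
Qed.

Let sqr_remainder_le n x : (((S n x - Y x) ^+ 2)%:E <= tail n * B n x)%E.
Proof.
set t := fine (tail n); have tail_t : tail n = t%:E by rewrite fineK.
have t_ge0 : 0 <= t by rewrite -lee_fin -tail_t tail_ge0.
have ct m : \sum_(k < m) `|c (k + n)%N| <= t by rewrite -lee_fin -tail_t sum_le_tail.
have from_partial (b : R) : (forall m,
    \sum_(k < m) `|c (k + n)%N| * f (k + n)%N x ^+ 2 <= b) ->
    (((S n x - Y x) ^+ 2)%:E <= (t * b)%:E)%E.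
  move=> cfb; have [l Sl l_le] := partial_sums_cvg_tail_sqr_le (y := fun j => f j x) ct cfb.
  by rewrite /Y (fine_limn_esup_cvg Sl) lee_fin -opprB sqrrN.
have B_ge0 : (0 <= B n x)%E by apply: nneseries_ge0 => k _ _; rewrite lee_fin mulr_ge0 ?sqr_ge0.
have sum_le_B m : ((\sum_(k < m) `|c (k + n)%N| * f (k + n)%N x ^+ 2)%:E <= B n x)%E.
  have := @nneseries_lim_ge R (fun k => (`|c (k + n)%N| * f (k + n)%N x ^+ 2)%:E)
    xpredT 0 m (fun k _ _ => mulr_ge0 (normr_ge0 _) (sqr_ge0 _)).
  by rewrite sumEFin big_mkord.
have [B_inf|B_fin] := eqVneq (B n x) +oo%E; last first.
  have B_b : B n x = (fine (B n x))%:E by rewrite fineK // ge0_fin_numE ?B_ge0 // ltey.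
  by rewrite tail_t B_b -EFinM; apply: from_partial => m; rewrite -lee_fin -B_b sum_le_B.
have [t0|t_neq0] := eqVneq t 0; last first.
  by rewrite B_inf tail_t gt0_muley ?leey // lte_fin lt_def t_neq0 t_ge0.
(* here tail n * B n x = 0 * +oo = 0, but then c vanishes beyond n and so does
   the remainder *)
have c_tail0 k : c (k + n)%N = 0.
  apply/eqP; rewrite -normr_le0 -t0 (le_trans _ (ct k.+1)) //.
  by rewrite big_ord_recr /= lerDr sumr_ge0.
have rem0 : (((S n x - Y x) ^+ 2)%:E <= (t * 0)%:E)%E.
  by apply: from_partial => m; rewrite big1 // => k _; rewrite c_tail0 normr0 mul0r.
by rewrite tail_t t0 mul0e; rewrite mulr0 in rem0.
Qed.

Let mB n : measurable_fun setT (B n).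
Proof.
have := @ge0_emeasurable_sum _ _ R setT
  (fun k x => (`|c (k + n)%N| * f (k + n)%N x ^+ 2)%:E) xpredT.
apply=> [k x _ _|k _]; first by rewrite lee_fin mulr_ge0 ?sqr_ge0.
by apply/measurable_EFinP/measurable_funM => //; exact: measurable_funX.
Qed.

Let integral_tail_B n : (\int[P]_x (tail n * B n x) <= (fine (tail n) ^+ 2 * M)%:E)%E.
Proof.
set t := fine (tail n); have tail_t : tail n = t%:E by rewrite fineK.
have t_ge0 : 0 <= t by rewrite -lee_fin -tail_t tail_ge0.
under eq_integral do rewrite tail_t.
rewrite ge0_integralZl_EFin //; last first.
  by move=> x _; apply: nneseries_ge0 => k _ _; rewrite lee_fin mulr_ge0 ?sqr_ge0.
rewrite expr2 -mulrA EFinM lee_wpmul2l ?lee_fin //.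
rewrite integral_nneseries //; last 2 first.
- by move=> k; apply/measurable_EFinP/measurable_funM => //; exact: measurable_funX.
- by move=> k x _; rewrite lee_fin mulr_ge0 ?sqr_ge0.
apply: (@le_trans _ _ (\sum_(k <oo) (M%:E * (`|c (k + n)%N|)%:E))%E).
  apply: lee_nneseries => [k _ _|k _].
    by apply: integral_ge0 => x _; rewrite lee_fin mulr_ge0 ?sqr_ge0.
  under eq_integral do rewrite EFinM.
  rewrite ge0_integralZl_EFin //; last 2 first.
  - by move=> x _; rewrite lee_fin sqr_ge0.
  - exact/measurable_EFinP/measurable_funX.
  by rewrite muleC lee_wpmul2r ?lee_fin.
rewrite nneseriesZl => [|k _]; last by rewrite lee_fin.
by rewrite -/(tail n) tail_t -EFinM mulrC.
Qed.

Lemma qm_convergent_abs_summable : qm_convergent P (fun n x => \sum_(j < n) c j * f j x).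
Proof.
exists Y; split => //.
apply: (@squeeze_cvge _ _ _ _ (fun _ => 0%E) _ (fun n => (fine (tail n) ^+ 2 * M)%:E)).
- apply: nearW => n /=; apply/andP; split.
    by apply: integral_ge0 => x _; rewrite lee_fin sqr_ge0.
  apply: le_trans (integral_tail_B n); apply: ge0_le_integral => //.
  + by move=> x _; rewrite lee_fin sqr_ge0.
  + exact/measurable_EFinP/measurable_funX/(measurable_funB (mS n) mY).
  + exact: emeasurable_funM (measurable_cst _) (mB n).
  + by move=> x _; exact: sqr_remainder_le.
- exact: cvg_cst.
- apply: cvg_EFin; first exact: nearW.
  have t0 : fine (tail n) @[n --> \oo] --> 0 by apply: fine_cvg tail_cvg0.
  have tM : fine (tail n) * fine (tail n) * M @[n --> \oo] --> 0 * 0 * M.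
    by apply: cvgM; [exact: cvgM | exact: cvg_cst].
  by rewrite !mul0r in tM; under eq_fun do rewrite expr2.
Qed.

End AbsSummableSeries.

Section Orthogonality.
Context dT (T : measurableType dT) (R : realType) (mu : {measure set T -> \bar R}).

Lemma integrable_mul_of_sqr (f g : T -> R) :
  measurable_fun setT f -> measurable_fun setT g ->
  mu.-integrable setT (fun x => (f x ^+ 2)%:E) ->
  mu.-integrable setT (fun x => (g x ^+ 2)%:E) ->
  mu.-integrable setT (fun x => (f x * g x)%:E).
Proof.
move=> mf mg if2 ig2; apply: le_integrable (integrableD _ if2 ig2) => //.
  exact/measurable_EFinP/measurable_funM.
move=> x _ /=; rewrite lee_fin normrM (ger0_norm (addr_ge0 (sqr_ge0 _) (sqr_ge0 _))).
rewrite -(real_normK (num_real (f x))) -(real_normK (num_real (g x))).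
have := mulr_ge0 (normr_ge0 (f x)) (normr_ge0 (g x)).
by have := sqr_ge0 (`|f x| - `|g x|); rewrite !expr2; nra.
Qed.

Variables (I : eqType) (eps : I -> T -> R).
Hypothesis meps : forall i, measurable_fun setT (eps i).
Hypothesis eps_sqr_int : forall i, mu.-integrable setT (fun x => (eps i x ^+ 2)%:E).
Hypothesis eps_orth : forall i j, i != j -> (\int[mu]_x (eps i x * eps j x)%:E = 0)%E.

Let int_eps_mul i j : mu.-integrable setT (fun x => (eps i x * eps j x)%:E).
Proof. exact: integrable_mul_of_sqr. Qed.

Lemma integral_sqr_sum_orthogonal (a : nat -> R) (u : nat -> I) n : injective u ->
  (\int[mu]_x ((\sum_(j < n) a j * eps (u j) x) ^+ 2)%:E =
   \sum_(j < n) (a j ^+ 2)%:E * \int[mu]_x (eps (u j) x ^+ 2)%:E)%E.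
Proof.
move=> u_inj.
have int_term j k : mu.-integrable setT (fun x => (a j * a k * (eps (u j) x * eps (u k) x))%:E).
  by under eq_fun do rewrite EFinM; exact: integrableZl (int_eps_mul _ _).
have expand x : (\sum_(j < n) a j * eps (u j) x) ^+ 2 =
    \sum_(j < n) \sum_(k < n) a j * a k * (eps (u j) x * eps (u k) x).
  rewrite expr2 mulr_suml; apply: eq_bigr => j _; rewrite mulr_sumr.
  by apply: eq_bigr => k _; rewrite mulrACA.
under eq_integral do rewrite expand -sumEFin.
rewrite integral_sum // => [|j]; last first.
  by under eq_fun do rewrite -sumEFin; apply: integrable_sum.
apply: eq_bigr => j _; under eq_integral do rewrite -sumEFin.
rewrite integral_sum // (bigD1 j) //= big1 ?adde0 => [|k kj].
  under eq_integral do rewrite EFinM -expr2.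
  by rewrite integralZl // -expr2; under eq_integral do rewrite -expr2.
under eq_integral do rewrite EFinM.
by rewrite integralZl ?eps_orth ?mule0 // (inj_eq u_inj) eq_sym.
Qed.

End Orthogonality.

Lemma integral_sqr_le_split dT (T : measurableType dT) (R : realType)
    (mu : {measure set T -> \bar R}) (s y : T -> R) :
  measurable_fun setT s -> measurable_fun setT y ->
  (\int[mu]_x (y x ^+ 2)%:E <=
   2%:E * \int[mu]_x ((s x - y x) ^+ 2)%:E + 2%:E * \int[mu]_x (s x ^+ 2)%:E)%E.
Proof.
move=> ms my; have msy : measurable_fun setT (fun x => s x - y x) by exact: measurable_funB.
have twice_sqr (g : T -> R) : measurable_fun setT g ->
    (\int[mu]_x (2 * g x ^+ 2)%:E = 2%:E * \int[mu]_x (g x ^+ 2)%:E)%E.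
  move=> mg; under eq_integral do rewrite EFinM.
  rewrite ge0_integralZl_EFin // => [x _|]; first by rewrite lee_fin sqr_ge0.
  exact/measurable_EFinP/measurable_funX.
have m2sqr (g : T -> R) : measurable_fun setT g ->
    measurable_fun setT (fun x => (2 * g x ^+ 2)%:E).
  by move=> mg; exact/measurable_EFinP/measurable_funM/measurable_funX.
have sqr2_ge0 (g : T -> R) x : setT x -> (0 <= (2 * g x ^+ 2)%:E)%E.
  by rewrite lee_fin mulr_ge0 ?sqr_ge0.
rewrite -(twice_sqr _ msy) -(twice_sqr _ ms) -ge0_integralD //; last 4 first.
- exact: sqr2_ge0.
- exact: m2sqr.
- exact: sqr2_ge0.
- exact: m2sqr.
apply: ge0_le_integral => //.
- by move=> x _; rewrite lee_fin sqr_ge0.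
- exact/measurable_EFinP/measurable_funX.
- by apply: emeasurable_funD; exact: m2sqr.
- move=> x _; rewrite -EFinD lee_fin.
  by have := sqr_ge0 (2 * s x - y x); rewrite !expr2; nra.
Qed.

Lemma qm_cvg_integral_sqr_le dT (T : measurableType dT) (R : realType)
    (P : probability T R) (S : nat -> T -> R) (Y : T -> R) (A : R) :
  (forall n, measurable_fun setT (S n)) -> qm_cvg P S Y ->
  (forall n, (\int[P]_x (S n x ^+ 2)%:E <= A%:E)%E) ->
  (\int[P]_x (Y x ^+ 2)%:E <= (2 * A)%:E)%E.
Proof.
move=> mS [mY dist0] SA.
have bound_cvg : (2%:E * \int[P]_x ((S n x - Y x) ^+ 2)%:E + (2 * A)%:E)%E
    @[n --> \oo] --> (2 * A)%:E.
  rewrite -[X in _ --> X]add0e; apply: cvgeD => //; last exact: cvg_cst.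
  by rewrite -(mule0 2%:E); exact: cvgeZl.
apply: cvge_ge bound_cvg; apply: nearW => n.
apply: le_trans (integral_sqr_le_split _ (mS n) mY) _.
by rewrite EFinM leeD2l // lee_wpmul2l ?lee_fin.
Qed.

Lemma periodic_le_sum_period (R : numDomainType) (sigma : int -> R) (p : nat) :
  (0 < p)%N -> (forall t, 0 <= sigma t) -> (forall t, sigma (t + p%:Z) = sigma t) ->
  forall t, sigma t <= \sum_(k < p) sigma k%:Z.
Proof.
move=> p_gt0 sigma_ge0 sigma_per t.
have pz_neq0 : p%:Z != 0 by rewrite eqz_nat -lt0n.
have shift t' (k : nat) : sigma (t' + k%:Z * p%:Z) = sigma t'.
  elim: k => [|k IH]; first by rewrite mul0r addr0.
  have -> : t' + k.+1%:Z * p%:Z = t' + k%:Z * p%:Z + p%:Z by lia.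
  by rewrite sigma_per.
have sigma_mod : sigma t = sigma (t %% p)%Z.
  have t_eq := divz_eq t p%:Z; case: (t %/ p)%Z t_eq => [q|q] t_eq.
    by rewrite {1}t_eq addrC shift.
  rewrite -(shift _ q.+1); congr sigma; rewrite {1}t_eq NegzE; lia.
have r_ge0 : 0 <= (t %% p)%Z by exact: modz_ge0.
have r_lt : (`|(t %% p)%Z|%N < p)%N by rewrite -ltz_nat gez0_abs ?ltz_pmod ?ltz_nat.
rewrite sigma_mod -(gez0_abs r_ge0) (bigD1 (Ordinal r_lt)) //= lerDl.
exact: sumr_ge0.
Qed.

Lemma int_decomp_period (p : nat) (s : int) : (0 < p)%N ->
  exists2 i : nat, (1 <= i <= p)%N & exists m : int, s = i%:Z + p%:Z * m.
Proof.
move=> p_gt0; have pz_neq0 : p%:Z != 0 by rewrite eqz_nat -lt0n.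
set r := ((s - 1) %% p%:Z)%Z.
have r_ge0 : 0 <= r by exact: modz_ge0.
have r_lt : r < p%:Z by rewrite ltz_pmod ?ltz_nat.
have r_abs : `|r|%N%:Z = r by rewrite gez0_abs.
have s_eq := divz_eq (s - 1) p%:Z.
exists `|r|%N.+1; first by apply/andP; split => //; lia.
by exists ((s - 1) %/ p%:Z)%Z; rewrite -/r in s_eq; lia.
Qed.

Lemma uniform_bound_of_bounded (R : realDomainType) (F : nat -> nat -> R) (p : nat) :
  (forall i, (1 <= i <= p)%N -> exists K, forall n, F i n <= K) ->
  exists K, forall i, (1 <= i <= p)%N -> forall n, F i n <= K.
Proof.
elim: p => [|p IH] bounded; first by exists 0 => i /andP[/leq_trans le1 /le1].
have [K1 K1_bound] : exists K, forall i, (1 <= i <= p)%N -> forall n, F i n <= K.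
  by apply: IH => i /andP[i_ge1 i_le]; apply: bounded; rewrite i_ge1 leqW.
have [K2 K2_bound] := bounded p.+1 (leqnn _).
exists (Num.max K1 K2) => i /andP[i_ge1]; rewrite leq_eqVlt ltnS => /orP[/eqP -> n|i_le n].
  by rewrite le_max K2_bound orbT.
by rewrite le_max K1_bound ?i_ge1.
Qed.

Section PeriodicProcess.
Context dT (T : measurableType dT) (R : realType) (P : probability T R).
Variables (p : nat) (d : nat -> R) (eps X : int -> T -> R).
Hypothesis p_gt0 : (0 < p)%N.
Hypothesis d_range : forall i, (1 <= i <= p)%N -> 0 < d i < 1 / 2.
Hypothesis meps : forall t, measurable_fun setT (eps t).
Hypothesis eps_sqr_int : forall t, P.-integrable setT (fun x => (eps t x ^+ 2)%:E).
Hypothesis eps_orth : forall s t, s != t -> (\int[P]_x (eps s x * eps t x)%:E = 0)%E.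
Hypothesis eps_var_periodic : forall t,
  (\int[P]_x (eps (t + p%:Z) x ^+ 2)%:E = \int[P]_x (eps t x ^+ 2)%:E)%E.
Hypothesis X_qm : forall (i : nat) (m : int), (1 <= i <= p)%N ->
  qm_cvg P (fun n x => \sum_(j < n) psi_coef (d i) j * eps (i%:Z + p%:Z * m - j%:Z) x)
    (X (i%:Z + p%:Z * m)).

Let sigma t := fine (\int[P]_x (eps t x ^+ 2)%:E).

Let sigmaE t : (\int[P]_x (eps t x ^+ 2)%:E = (sigma t)%:E)%E.
Proof. by rewrite fineK // integrable_fin_num. Qed.

Let sigma_ge0 t : 0 <= sigma t.
Proof. by rewrite -lee_fin -sigmaE integral_ge0 // => x _; rewrite lee_fin sqr_ge0. Qed.

Let sigma_le t : sigma t <= \sum_(k < p) sigma k%:Z.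
Proof.
apply: periodic_le_sum_period => // t'.
by rewrite /sigma eps_var_periodic.
Qed.

Let psi_sqr_sum_bounded :
  exists K, forall i, (1 <= i <= p)%N -> forall n, \sum_(j < n) psi_coef (d i) j ^+ 2 <= K.
Proof.
apply: uniform_bound_of_bounded => i /d_range /andP[d_gt0 d_lt].
exact: sum_sqr_gamma_ratio_bounded.
Qed.

Lemma X_sqr_integral_bounded :
  exists MX, forall s, measurable_fun setT (X s) /\ (\int[P]_x (X s x ^+ 2)%:E <= MX%:E)%E.
Proof.
have [K K_bound] := psi_sqr_sum_bounded.
set V := \sum_(k < p) sigma k%:Z.
exists (2 * (K * V)) => s; have [i i_range [m ->]] := int_decomp_period s p_gt0.
split; first exact: (X_qm m i_range).1.
apply: (qm_cvg_integral_sqr_le _ (X_qm m i_range)) => n.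
  by apply: measurable_sum => j; apply: measurable_funM.
rewrite (integral_sqr_sum_orthogonal meps eps_sqr_int eps_orth _
  (u := fun j : nat => i%:Z + p%:Z * m - j%:Z)); last by move=> j k; lia.
under eq_bigr do rewrite sigmaE -EFinM.
rewrite sumEFin lee_fin (le_trans (_ : _ <= \sum_(j < n) psi_coef (d i) j ^+ 2 * V)) //.
  by apply: ler_sum => j _; rewrite ler_wpM2l ?sqr_ge0 ?sigma_le.
by rewrite -mulr_suml ler_wpM2r ?K_bound ?sumr_ge0.
Qed.

End PeriodicProcess.

Unset Implicit Arguments.

Theorem proposition2 (R : realType) (dT : measure_display) (T : measurableType dT)
  (P : probability T R) (p : nat) (d : nat -> R)
  (eps : int -> T -> R) (X : int -> T -> R) :
  (1 < p)%N ->
  (forall i : nat, (1 <= i <= p)%N -> 0 < d i < 1 / 2) ->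
  (forall t : int, measurable_fun setT (eps t)) ->
  (forall t : int, P.-integrable setT (fun x => ((eps t x) ^+ 2)%:E)) ->
  (forall t : int, (\int[P]_x (eps t x)%:E = 0)%E) ->
  (forall s t : int, s != t -> (\int[P]_x (eps s x * eps t x)%:E = 0)%E) ->
  (forall t : int, (\int[P]_x ((eps (t + p%:Z) x) ^+ 2)%:E
             = \int[P]_x ((eps t x) ^+ 2)%:E)%E) ->
  (forall (i : nat) (m : int), (1 <= i <= p)%N ->
     qm_cvg P
       (fun n x => \sum_(j < n) psi_coef (d i) j * eps (i%:Z + p%:Z * m - j%:Z) x)
       (X (i%:Z + p%:Z * m))) ->
  forall (i : nat) (m : int), (1 <= i <= p)%N ->
    qm_convergent P
      (fun n x => \sum_(j < n) pi_coef (d i) j * X (i%:Z + p%:Z * m - j%:Z) x).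
Proof.
move=> p_gt1 d_range meps eps_sqr_int _ eps_orth eps_var_periodic X_qm i m i_range.
have [MX X_bound] := X_sqr_integral_bounded (ltnW p_gt1) d_range meps eps_sqr_int
  eps_orth eps_var_periodic X_qm.
have di_bounds : 0 < d i < 1.
  by have /andP[d_gt0 d_lt] := d_range i i_range; rewrite d_gt0 (lt_le_trans d_lt) //; lra.
apply: (qm_convergent_abs_summable (f := fun j => X (i%:Z + p%:Z * m - j%:Z))
  (M := MX) (C := 2)).
- by move=> j; exact: (X_bound _).1.
- by move=> j; exact: (X_bound _).2.
- by move=> n; exact: sum_norm_gamma_ratioN_le2 n di_bounds.
Qed.
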